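(* Let $a,b$ be vertices of $\mathcal{CG}(\Sigma)$. For all $x,y,z\in Cyl(a,b)$ one has ${\rm Diff}_{a,b}(x,z)={\rm Diff}_{a,b}(x,y)+{\rm Diff}_{a,b}(y,z)$. Consequently, the relation ${\rm Diff}_{a,b}(x,y)=0$ is an equivalence relation on $Cyl(a,b)$ (its classes are called slices); the value ${\rm Diff}_{a,b}(x,y)$ depends only on the slices of $x$ and $y$; and the relation on slices defined by $S<S'$ if ${\rm Diff}_{a,b}(x,y)<0$ for all $x\in S$, $y\in S'$ is a total order on the set of slices of $Cyl(a,b)$.
   Context: $\Sigma$ is a compact orientable surface and $\mathcal{CG}(\Sigma)$ its curve graph with path metric $d$ (written $|u-v|=d(u,v)$); $\delta\in\mathbb{N}$ is a hyperbolicity constant. Tight geodesics are those of Masur–Minsky/Bowditch. Constants: $\lambda=1000\delta$; $\epsilon$ a positive integer such that any $\lambda$-quasi-geodesic stays within $\epsilon$ of any geodesic joining its endpoints; $\mu=(100\epsilon+\lambda^2)\cdot 40\lambda$; $\nu=40\lambda(\epsilon+100\lambda\delta)$. Paths start and end at vertices; length is number of edges. For an integer $l\ge\mu$, an $l$-cptg is a $\nu$-local $\frac{\lambda}{2}$-quasi-geodesic $f:[a,b]\to\mathcal{CG}(\Sigma)$ (every subpath of length at most $\nu$ is a $\frac{\lambda}{2}$-bi-Lipschitz embedding of a real segment) with a subdivision $a=c_1\le d_1\le c_2\le\dots\le c_n\le d_n=b$ such that each $f([c_i,d_i])$ is a $\mu$-local tight geodesic (every subpath of length $\mu$ is a tight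 geodesic), of length at least $l$ for $2\le i\le n-1$, each $f([d_i,c_{i+1}])$ has length at most $\epsilon$, and $f([a,b])$ lies in the $2\epsilon$-neighbourhood of a tight geodesic from $f(a)$ to $f(b)$. The $l$-cylinder $Cyl_l(x,y)$ is the set of vertices $v$ such that for some $l$-cptg $f$ from $x$ to $y$ and some $i$, $v=f(t)$, $t\in[c_i,d_i]$, $d(f(c_i),v)\ge l$ if $f(c_i)\ne x$, $d(f(d_i),v)\ge l$ if $f(d_i)\ne y$. An integer $l\ge\mu$ is fixed such that all $l$-cylinders are finite, and $Cyl(a,b)$ denotes $Cyl_l(a,b)$. For $x\in Cyl(a,b)$: $N^{(a,b)}_R(x)$ is the set of $v\in Cyl(a,b)$ with $|a-x|<|a-v|$ and $|x-v|>100\delta$; $N^{(a,b)}_L(x)$ is the set of $v\in Cyl(a,b)$ with $|a-x|>|a-v|$ and $|x-v|>100\delta$. For $x,y\in Cyl(a,b)$, ${\rm Diff}_{a,b}(x,y)=\sharp(N_L(x)\setminus N_L(y))-\sharp(N_L(y)\setminus N_L(x))+\sharp(N_R(y)\setminus N_R(x))-\sharp(N_R(x)\setminus N_R(y))$, with $N=N^{(a,b)}$ and $\sharp$ denoting cardinality. *)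

From mathcomp Require Import all_boot all_order all_algebra.
Set Implicit Arguments. Unset Strict Implicit. Unset Printing Implicit Defensive.
Import GRing.Theory Num.Theory.

(* The curve graph CG(Sigma) is abstracted as a graph on a vertex type V with
   (boolean) adjacency adj, path metric d, and an abstract predicate [tight]
   on finite vertex sequences singling out the tight (Masur--Minsky/Bowditch)
   sequences. A path f:[s,e] -> CG is a function
   f : nat -> V of which only the values on [s,e] matter. *)

Section Cyl.
Variables (V : eqType) (adj : rel V) (d : V -> V -> nat) (tight : seq V -> Prop).

Definition walk (f : nat -> V) (s e : nat) : Prop :=
  forall t, s <= t < e -> adj (f t) (f t.+1).

Definition path_metric : Prop :=
  forall x y n, d x y <= n <->
    exists (f : nat -> V) (m : nat), [/\ f 0 = x, f m = y, walk f 0 m & m <= n].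

(* delta-hyperbolicity (four point condition, with doubled Gromov products) *)
Definition hyperbolic (delta : nat) : Prop :=
  forall x y z w, d x y + d z w <= maxn (d x z + d y w) (d x w + d y z) + 2 * delta.

Definition geodesic (f : nat -> V) (s e : nat) : Prop :=
  s <= e /\ walk f s e /\ d (f s) (f e) = e - s.

Definition tight_geodesic (f : nat -> V) (s e : nat) : Prop :=
  geodesic f s e /\ tight [seq f t | t <- iota s (e - s).+1].

Definition local_tight (m : nat) (f : nat -> V) (s e : nat) : Prop :=
  forall u v, s <= u -> u <= v -> v <= e -> v - u <= m -> tight_geodesic f u v.

Definition bilip (K : nat) (f : nat -> V) (s e : nat) : Prop :=
  forall u v, s <= u -> u <= v -> v <= e ->
    v - u <= K * d (f u) (f v) /\ d (f u) (f v) <= K * (v - u).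

Definition local_qg (nu K : nat) (f : nat -> V) (s e : nat) : Prop :=
  forall u v, s <= u -> u <= v -> v <= e -> v - u <= nu -> bilip K f u v.

Definition near (r : nat) (f : nat -> V) (s e : nat) (v : V) : Prop :=
  exists t, [/\ s <= t, t <= e & d (f t) v <= r].

(* defining property of eps: lam-quasi-geodesics stay eps-close to geodesics *)
Definition qg_stability (lam eps : nat) : Prop :=
  forall (f : nat -> V) s e (g : nat -> V) s' e',
    s <= e -> walk f s e -> bilip lam f s e ->
    geodesic g s' e' -> g s' = f s -> g e' = f e ->
    forall t, s <= t -> t <= e -> near eps g s' e' (f t).

Definition lam (delta : nat) : nat := 1000 * delta.
Definition mu (delta eps : nat) : nat := (100 * eps + lam delta ^ 2) * (40 * lam delta).
Definition nu (delta eps : nat) : nat := 40 * lam delta * (eps + 100 * lam delta * delta).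

Section CPTG.
Variables (delta eps l : nat).

Definition cc (cs : seq (nat * nat)) (i : nat) : nat := (nth (0, 0) cs i).1.
Definition dd (cs : seq (nat * nat)) (i : nat) : nat := (nth (0, 0) cs i).2.

(* f : [s,e] -> CG is an l-cptg from x to y with subdivision
   c_1 <= d_1 <= ... <= c_n <= d_n given by cs = [(c_1,d_1);...;(c_n,d_n)]
   (0-indexed in Rocq). *)
Definition cptg (f : nat -> V) (s e : nat) (cs : seq (nat * nat)) (x y : V) : Prop :=
  [/\ s <= e, f s = x, f e = y, walk f s e &
      local_qg (nu delta eps) (lam delta %/ 2) f s e] /\
  [/\ 0 < size cs, cc cs 0 = s & dd cs (size cs).-1 = e] /\
  [/\ (forall i, i < size cs -> cc cs i <= dd cs i),
      (forall i, i.+1 < size cs -> dd cs i <= cc cs i.+1),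
      (forall i, i < size cs -> local_tight (mu delta eps) f (cc cs i) (dd cs i)),
      (forall i, 0 < i -> i.+1 < size cs -> l <= dd cs i - cc cs i) &
      (forall i, i.+1 < size cs -> cc cs i.+1 - dd cs i <= eps)] /\
  exists (g : nat -> V) (s' e' : nat),
    [/\ tight_geodesic g s' e', g s' = x, g e' = y &
        forall t, s <= t -> t <= e -> near (2 * eps) g s' e' (f t)].

Definition Cyl (x y : V) (v : V) : Prop :=
  exists (f : nat -> V) (s e : nat) (cs : seq (nat * nat)),
    cptg f s e cs x y /\
    exists i t, [/\ i < size cs, cc cs i <= t, t <= dd cs i & v = f t] /\
      ((f (cc cs i) <> x -> l <= d (f (cc cs i)) v) /\
            (f (dd cs i) <> y -> l <= d (f (dd cs i)) v)).

End CPTG.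

(* Given a duplicate-free enumeration cyl of Cyl(a,b): *)
Definition inNR (delta : nat) (a x v : V) : bool := (d a x < d a v) && (100 * delta < d x v).
Definition inNL (delta : nat) (a x v : V) : bool := (d a x > d a v) && (100 * delta < d x v).

Definition Diff (delta : nat) (a : V) (cyl : seq V) (x y : V) : int :=
  (count (fun v => inNL delta a x v && ~~ inNL delta a y v) cyl)%:Z
  - (count (fun v => inNL delta a y v && ~~ inNL delta a x v) cyl)%:Z
  + (count (fun v => inNR delta a y v && ~~ inNR delta a x v) cyl)%:Z
  - (count (fun v => inNR delta a x v && ~~ inNR delta a y v) cyl)%:Z.

End Cyl.

(** Diff is a coboundary: with [w v = #N_R(v) - #N_L(v)] one has
    [Diff x y = w y - w x], because [#(A \ B) - #(B \ A) = #A - #B].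
    Hence the cocycle identity, and slices are the level sets of [w] on
    [Cyl(a,b)], ordered by the value of [w]. *)
From Stdlib Require Import PropExtensionality FunctionalExtensionality.
From mathcomp Require Import all_boot all_order all_algebra.
From mathcomp Require Import zify.
Import Order.TTheory GRing.Theory Num.Theory.
Local Open Scope ring_scope.

Lemma count_andN_sub {T : Type} (p q : pred T) (s : seq T) :
  (count (fun v => p v && ~~ q v) s)%:Z - (count (fun v => q v && ~~ p v) s)%:Z
  = (count p s)%:Z - (count q s)%:Z.
Proof. by elim: s => //= v s; case: (p v); case: (q v) => /=; lia. Qed.

Definition balance {V : eqType} (d : V -> V -> nat) (delta : nat) (a : V)
    (cyl : seq V) (v : V) : int :=
  (count (inNR d delta a v) cyl)%:Z - (count (inNL d delta a v) cyl)%:Z.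

Lemma Diff_balance {V : eqType} (d : V -> V -> nat) delta a cyl x y :
  Diff d delta a cyl x y = balance d delta a cyl y - balance d delta a cyl x.
Proof.
rewrite /Diff /balance.
have NL := count_andN_sub (inNL d delta a x) (inNL d delta a y) cyl.
have NR := count_andN_sub (inNR d delta a y) (inNR d delta a x) cyl.
lia.
Qed.

Section Coboundary.
Context {T : Type} {C : T -> Prop} {w : T -> int} {D : T -> T -> int}.
Hypothesis D_coboundary : forall x y, D x y = w y - w x.

Lemma coboundary_cocycle x y z : D x z = D x y + D y z.
Proof. rewrite !D_coboundary; lia. Qed.

Definition slice_of (x : T) : T -> Prop := fun v => C v /\ D x v = 0.
Definition is_slice (S : T -> Prop) : Prop := exists x, C x /\ S = slice_of x.
Definition slice_lt (S S' : T -> Prop) : Prop :=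
  forall x y, S x -> S' y -> D x y < 0.

Lemma slice_ofE x : slice_of x = fun v => C v /\ w v = w x.
Proof.
apply: functional_extensionality => v; apply: propositional_extensionality.
rewrite /slice_of D_coboundary; split=> -[Cv E]; split=> //; lia.
Qed.

Lemma slice_of_self {x : T} : C x -> slice_of x x.
Proof. by move=> Cx; split=> //; rewrite D_coboundary subrr. Qed.

Lemma slice_lt_irrefl S : is_slice S -> ~ slice_lt S S.
Proof.
move=> [x [Cx ->]] lt_xx; have := lt_xx x x (slice_of_self Cx) (slice_of_self Cx).
by rewrite D_coboundary subrr ltxx.
Qed.

Lemma slice_lt_trans S S' S'' :
  is_slice S' -> slice_lt S S' -> slice_lt S' S'' -> slice_lt S S''.
Proof.
move=> [y [Cy ->]] lt1 lt2 x z Sx Sz.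
have := lt1 x y Sx (slice_of_self Cy); have := lt2 y z (slice_of_self Cy) Sz.
rewrite !D_coboundary; lia.
Qed.

Lemma slice_lt_total S S' : is_slice S -> is_slice S' ->
  [\/ S = S', slice_lt S S' | slice_lt S' S].
Proof.
move=> [x [_ ->]] [y [_ ->]]; rewrite !slice_ofE.
case: (ltgtP (w x) (w y)) => [lt_xy | lt_yx | ->]; last by constructor 1.
- by constructor 3 => u v [_ Eu] [_ Ev]; rewrite D_coboundary Eu Ev subr_lt0.
- by constructor 2 => u v [_ Eu] [_ Ev]; rewrite D_coboundary Eu Ev subr_lt0.
Qed.

End Coboundary.

Theorem lemma1p13 (V : eqType) (adj : rel V) (d : V -> V -> nat)
  (tight : seq V -> Prop) (delta eps l : nat)
  (Hsym : symmetric adj) (Hirr : irreflexive adj)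
  (Hd : path_metric adj d) (Hhyp : hyperbolic d delta)
  (Heps0 : (0 < eps)%N) (Heps : qg_stability adj d (lam delta) eps)
  (Hl : (mu delta eps <= l)%N)
  (Hfin : forall x y : V, exists cyl : seq V,
      forall v, Cyl adj d tight delta eps l x y v <-> v \in cyl)
  (a b : V) (cyl : seq V) (Huniq : uniq cyl)
  (Hcyl : forall v, Cyl adj d tight delta eps l a b v <-> v \in cyl) :
  let C := Cyl adj d tight delta eps l a b in
  let D := Diff d delta a cyl in
  let is_slice := fun S : V -> Prop =>
    exists x, C x /\ S = (fun v => C v /\ D x v = 0) in
  let slice_lt := fun S S' : V -> Prop =>
    forall x y, S x -> S' y -> D x y < 0 in
  (* cocycle identity *)
  (forall x y z, C x -> C y -> C z -> D x z = D x y + D y z) /\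
  (* Diff = 0 is an equivalence relation on Cyl(a,b) *)
  ((forall x, C x -> D x x = 0) /\
   (forall x y, C x -> C y -> D x y = 0 -> D y x = 0) /\
   (forall x y z, C x -> C y -> C z -> D x y = 0 -> D y z = 0 -> D x z = 0)) /\
  (* Diff depends only on the slices *)
  (forall x x' y y', C x -> C x' -> C y -> C y' ->
     D x x' = 0 -> D y y' = 0 -> D x y = D x' y') /\
  (* < is a (strict) total order on the set of slices *)
  ((forall S, is_slice S -> ~ slice_lt S S) /\
   (forall S S' S'', is_slice S -> is_slice S' -> is_slice S'' ->
      slice_lt S S' -> slice_lt S' S'' -> slice_lt S S'') /\
   (forall S S', is_slice S -> is_slice S' ->
      [\/ S = S', slice_lt S S' | slice_lt S' S])).
Proof.
move=> C D is_slice slice_lt.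
have HD : forall x y, D x y = balance d delta a cyl y - balance d delta a cyl x.
  exact: Diff_balance.
have cocycle := coboundary_cocycle HD.
split; first by move=> x y z _ _ _; apply: cocycle.
split.
  split; first by move=> x _; rewrite HD subrr.
  split; first by move=> x y _ _; rewrite !HD; lia.
  by move=> x y z _ _ _ Dxy Dyz; rewrite (cocycle _ y) Dxy Dyz.
split; first by move=> x x' y y' _ _ _ _ Dxx' Dyy'; rewrite !HD in Dxx' Dyy' *; lia.
split; first exact: (slice_lt_irrefl (C := C) (D := D) HD).
split.
  by move=> S S' S'' _ S'_slice _; exact: (slice_lt_trans (C := C) (D := D) HD).
exact: (slice_lt_total (C := C) (D := D) HD).
Qed.
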